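(* Let $e\in\mathbb{Z}^+$, $f\in\mathbb{Z}_{\ge0}$, let $F$ be a proper flat in $\mathbb{R}^{\binom{e+2}{2}-1}$, and let $A\subseteq\mathbb{R}^2$ with $|A|=\binom{f+2}{2}$ be such that $A$ is not contained in any element of $\mathcal{C}_{\le f}$. (i) If $e\geq f$, then $|\psi_e(A)\cap F|\le 1+\dim F$. (ii) If $e<f$, then $|\psi_e(A)\cap F|\le\binom{f+2}{2}-\binom{f-e+2}{2}-\binom{e+2}{2}+2+\dim F$. (iii) If $e<f$, then $\dim\psi_d\big(A\setminus\psi_e^{-1}(F)\big)\geq\binom{f-e+2}{2}-1$ for every integer $d\geq f-e$.
   Context: For $k\in\mathbb{Z}^+$, a curve of degree $k$ is the zero set in $\mathbb{R}^2$ of a polynomial in $\mathbb{R}[x,y]$ of degree exactly $k$; $\mathcal{C}_k$ is the family of such curves, $\mathcal{C}_{\le k}:=\bigcup_{j=1}^k\mathcal{C}_j$, and $\mathcal{C}_{\le 0}:=\emptyset$. For $k\in\mathbb{Z}^+$ let $I_k=\{(i,j)\in\mathbb{Z}_{\ge 0}^2: 1\le i+j\le k\}$ (so $|I_k|=\binom{k+2}{2}-1$) and let the $k$-Veronese map be $\psi_k:\mathbb{R}^2\to\mathbb{R}^{\binom{k+2}{2}-1}$, $\psi_k(a_1,a_2)=(a_1^ia_2^j)_{(i,j)\in I_k}$. A flat is an affine subspace (translate of a linear subspace), its dimension being that of the linear subspace. For $S\subseteq\mathbb{R}^N$, $\mathrm{Fl}(S)$ is the smallest flat containing $S$ (the affine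 hull), $\mathrm{Fl}(\emptyset)=\emptyset$, and $\dim S:=\dim\mathrm{Fl}(S)$, with $\dim\emptyset=-1$. *)

From HB Require Import structures.
From mathcomp Require Import all_boot all_order all_algebra.
From mathcomp Require Import mpoly.
Set Implicit Arguments. Unset Strict Implicit. Unset Printing Implicit Defensive.
Import Order.TTheory GRing.Theory Num.Theory.
Local Open Scope ring_scope.

(* Exponent index set I_k = {(i,j) : 1 <= i + j <= k}; its cardinality is
   'C(k+2,2) - 1, so {ffun Ik k -> R} is R^('C(k+2,2)-1) with coordinates
   indexed by I_k exactly as in the paper. *)
Definition Ik (k : nat) : finType :=
  {p : 'I_k.+1 * 'I_k.+1 | (1 <= p.1 + p.2 <= k)%N}.

Notation Vk R k := {ffun Ik k -> R^o}.

Definition veronese (R : ringType) (k : nat) (a : R * R) : Vk R k :=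
  [ffun t : Ik k => a.1 ^+ (val t).1 * a.2 ^+ (val t).2].

Definition pt (R : ringType) (a : R * R) : 'I_2 -> R :=
  fun i => if i == ord0 then a.1 else a.2.

Definition on_zero_set (R : comRingType) (p : {mpoly R[2]}) (a : R * R) : bool :=
  p.@[pt a] == 0.

(* A curve of degree exactly k is the zero set of a polynomial of total
   degree exactly k (msize p = 1 + total degree).  A is contained in an
   element of C_{<= f}: *)
Definition in_curve_le (R : comRingType) (f : nat) (A : seq (R * R)) : Prop :=
  exists k : nat, (1 <= k <= f)%N /\
    exists p : {mpoly R[2]}, msize p = k.+1 /\ all (on_zero_set p) A.

Definition flat_mem (R : fieldType) (V : vectType R) (v0 : V) (U : {vspace V})
  (x : V) : bool := (x - v0) \in U.

(* Fl(S): the smallest flat containing S (empty if S is empty), i.e. the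
   intersection of all flats containing S. *)
Definition Fl (R : fieldType) (V : vectType R) (S : V -> Prop) : V -> Prop :=
  fun x => (exists s, S s) /\
    forall (v0 : V) (U : {vspace V}), (forall y, S y -> flat_mem v0 U y) ->
      flat_mem v0 U x.

(* has_dim S n : dim S = dim Fl(S) = n, with dim of the empty set = -1. *)
Definition has_dim (R : fieldType) (V : vectType R) (S : V -> Prop) (n : int)
  : Prop :=
  ((~ exists s, S s) /\ n = -1) \/
  exists (v0 : V) (U : {vspace V}),
    (forall x, Fl S x <-> flat_mem v0 U x) /\ n = (\dim U)%:Z.

From HB Require Import structures.
From mathcomp Require Import all_boot all_order all_algebra.
From mathcomp Require Import mpoly.
From mathcomp Require Import zify.
Import Order.TTheory GRing.Theory Num.Theory.
Local Open Scope ring_scope.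
Set Implicit Arguments. Unset Strict Implicit. Unset Printing Implicit Defensive.

(* Polynomials of degree at most k in two variables are the affine functionals on
   R^(I_k) composed with psi_k.  Since A lies on no curve of degree <= f, a polynomial
   of degree <= f vanishing on A is zero.  The affine functionals vanishing on the flat
   F form a space J of dimension at least dim R^(I_e) - dim F; its elements are
   polynomials of degree <= e vanishing on A_F := {a in A | psi_e(a) in F}.
   (i) If f <= e, the polynomials of degree <= f lying in J are determined by their
   values on A \ A_F; counting dimensions inside the polynomials of degree <= e bounds
   |A_F|.
   (ii) If e < f, fix g in J of maximal degree.  If g h + mu vanishes on A \ A_F, with
   deg h <= f - e and mu in J, it vanishes on A, hence g h = - mu; then
   deg (g h) <= deg g forces h to be a constant c and mu = - c g.  So the map
   (h, mu) |-> (g h + mu)|_(A \ A_F) has a one-dimensional kernel, which bounds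
   |A \ A_F| from below.
   (iii) If e < f, a polynomial h of degree <= f - e vanishing on A \ A_F is zero,
   since g h vanishes on A.  Hence the affine functionals vanishing on psi_d(A \ A_F)
   meet the polynomials of degree <= f - e trivially, which bounds
   dim psi_d(A \ A_F) from below. *)

Lemma card_Ik k : (#|Ik k|).+1 = 'C(k.+2, 2).
Proof.
have row_card (i : 'I_k.+1) : #|[pred j : 'I_k.+1 | i + j <= k]%N| = (k.+1 - i)%N.
  have le_ik : (k.+1 - i <= k.+1)%N by rewrite leq_subr.
  rewrite -sum1_card (eq_bigl (fun j : 'I_k.+1 => predT j && (j < k.+1 - i)%N)).
    by rewrite big_ord_narrow_cond sum1_card card_ord.
  by move=> j; rewrite inE /=; have := ltn_ord i; lia.
have triangle : #|[pred p : 'I_k.+1 * 'I_k.+1 | p.1 + p.2 <= k]%N| = 'C(k.+2, 2).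
  rewrite -sum1_card.
  rewrite -(pair_big_dep xpredT (fun i j : 'I_k.+1 => i + j <= k)%N (fun _ _ => 1%N)) /=.
  rewrite (eq_bigr _ (fun i _ => etrans (sum1_card _) (row_card i))) /=.
  rewrite -(big_mkord xpredT (fun i => k.+1 - i)%N) big_nat_rev /= -bin2_sum.
  by rewrite [in RHS]big_nat_recl //; apply: eq_big_nat => i /andP[_ lt_ik]; lia.
rewrite card_sig -triangle [RHS](cardD1 (ord0, ord0)) inE /= add1n; congr _.+1.
by apply: eq_card => -[i j]; rewrite !inE /= xpair_eqE -!val_eqE /= -addn_eq0 lt0n.
Qed.

Section LinearAlgebra.
Variable R : fieldType.

Definition hom_of_linear (aT rT : vectType R) (h : aT -> rT) (h_lin : linear h) :
    'Hom(aT, rT) :=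
  linfun (HB.pack h (GRing.isLinear.Build R aT rT *:%R h h_lin) : {linear aT -> rT}).

Lemma hom_of_linearE (aT rT : vectType R) (h : aT -> rT) (h_lin : linear h) x :
  hom_of_linear h_lin x = h x.
Proof. exact: lfunE. Qed.

Lemma dimv_leq_ker (aT rT : vectType R) (h : 'Hom(aT, rT)) (V W : {vspace aT}) :
  (forall v, v \in V -> h v = 0 -> v \in W) -> (\dim V <= \dim W + dim rT)%N.
Proof.
move=> hVW; rewrite -(limg_ker_dim h V) -dimvf leq_add ?dimvS ?subvf //.
by apply/subvP => v /memv_capP[vV]; rewrite memv_ker => /eqP/(hVW v vV).
Qed.

Lemma dimv_add_leq_cap (vT : vectType R) (V W : {vspace vT}) :
  (\dim V + \dim W <= \dim (V :&: W) + dim vT)%N.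
Proof. by rewrite -dimv_sum_cap [leqLHS]addnC leq_add2l -dimvf dimvS ?subvf. Qed.

Lemma dimv_img_inj (aT rT : vectType R) (h : 'Hom(aT, rT)) (V : {vspace aT}) :
  injective h -> \dim (h @: V) = \dim V.
Proof. by move/lker0P/eqP=> h0; rewrite limg_dim_eq // h0 capv0. Qed.

Lemma dim_regular_ffun (I : finType) : dim {ffun I -> R^o} = #|I|.
Proof. exact: muln1. Qed.

Lemma dim_affine (I : finType) : dim (R^o * {ffun I -> R^o})%type = #|I|.+1.
Proof. exact: (congr1 S (muln1 #|I|)). Qed.

Lemma Fl_seqE (vT : vectType R) (s : seq vT) (s0 : vT) : s0 \in s ->
  forall x, Fl (fun y => y \in s) x <-> flat_mem s0 <<[seq y - s0 | y <- s]>>%VS x.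
Proof.
move=> s0s x; split=> [[_ Fl_x] | x_s].
  by apply: Fl_x => y ys; apply/memv_span/map_f.
split=> [|w X sX]; first by exists s0.
have s_X : (<<[seq y - s0 | y <- s]>> <= X)%VS.
  apply/span_subvP => _ /mapP[y ys ->].
  rewrite -(subrKA w) memvD //; first exact: sX.
  by rewrite -opprB memvN; exact: sX.
by rewrite /flat_mem -(subrKA s0) memvD ?(subvP s_X _ x_s) //; apply: sX.
Qed.

End LinearAlgebra.

Section AffineFunctionals.
Variables (R : fieldType) (I : finType).
Local Notation V := {ffun I -> R^o}.

Definition dotv (l x : V) : R := \sum_i l i * x i.

Lemma dotvC l x : dotv l x = dotv x l.
Proof. by apply: eq_bigr => i _; rewrite mulrC. Qed.

Lemma dotv_linear l : linear (dotv l : V -> R^o).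
Proof.
move=> a x y; rewrite /dotv scaler_sumr -big_split; apply: eq_bigr => i _ /=.
by rewrite !ffunE mulrDr; congr (_ + _); exact: mulrCA.
Qed.
HB.instance Definition _ l :=
  GRing.isLinear.Build R V R^o *:%R (dotv l) (dotv_linear l).

Definition aff_eval (z : R^o * V) (x : V) : R := z.1 + dotv z.2 x.

Lemma aff_eval_linear x : linear (aff_eval ^~ x : R^o * V -> R^o).
Proof.
by move=> a z w; rewrite /aff_eval /= !(dotvC _ x) linearD linearZ /= scalerDr addrACA.
Qed.

Definition annihilator_eqs (w : V) (X : {vspace V}) (z : R^o * V) :
    R^o * {ffun 'I_(\dim X) -> R^o} :=
  (aff_eval z w, [ffun j : 'I_(\dim X) => dotv z.2 (vbasis X)`_j]).

Lemma annihilator_eqs_linear w X : linear (annihilator_eqs w X).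
Proof.
move=> a z y; congr (_, _); first exact: aff_eval_linear.
by apply/ffunP => j; rewrite !ffunE /= !(dotvC _ (vbasis X)`_j) linearP.
Qed.

Definition annihilator w X : {vspace R^o * V} :=
  lker (hom_of_linear (annihilator_eqs_linear w X)).

Lemma dim_annihilator w X : (#|I| <= \dim (annihilator w X) + \dim X)%N.
Proof.
rewrite /annihilator; set h := hom_of_linear _.
have := limg_ker_dim h fullv; rewrite capfv dimvf dim_affine => dimI.
rewrite -ltnS -addnS -dimI leq_add2l.
by have := dimvS (subvf (limg h)); rewrite dimvf dim_affine card_ord.
Qed.

Lemma annihilator_vanish w X z x :
  z \in annihilator w X -> flat_mem w X x -> aff_eval z x = 0.
Proof.
rewrite memv_ker hom_of_linearE => /eqP[z_w /ffunP z_X] x_X.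
have -> : aff_eval z x = aff_eval z w + dotv z.2 (x - w).
  by rewrite /aff_eval linearB /= addrACA subrr addr0.
rewrite z_w add0r (coord_vbasis x_X) linear_sum big1 // => j _.
by rewrite linearZ /=; have := z_X j; rewrite !ffunE => ->; rewrite scaler0.
Qed.

End AffineFunctionals.

(* z : Coef R k stands for the polynomial mpoly_of z, of degree at most k. *)
Notation Coef R k := (R^o * Vk R k)%type.

Section PolynomialsOfBoundedDegree.
Variable R : fieldType.

Definition mnm_of k (t : Ik k) : 'X_{1..2} :=
  [multinom (if i == ord0 then (val t).1 : nat else (val t).2) | i < 2].

Lemma mdeg_mnm_of k (t : Ik k) : mdeg (mnm_of t) = ((val t).1 + (val t).2)%N.
Proof. by rewrite mdegE big_ord_recl big_ord1 !mnmE. Qed.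

Lemma mnm_of_inj k : injective (@mnm_of k).
Proof.
move=> s t /mnmP st; apply/val_inj.
move: (st ord0) (st ord_max); rewrite !mnmE.
by case: (val s) (val t) => [a b] [c d] /= /val_inj -> /val_inj ->.
Qed.

Lemma mnm_of_neq0 k (t : Ik k) : mnm_of t != 0%MM.
Proof. by rewrite -mdeg_eq0 mdeg_mnm_of -lt0n; case/andP: (valP t). Qed.

Lemma mnm_ofP k (m : 'X_{1..2}) : m != 0%MM -> (mdeg m <= k)%N ->
  exists t : Ik k, mnm_of t = m.
Proof.
rewrite -mdeg_eq0 -lt0n mdegE big_ord_recl big_ord1 => m_gt0 m_le_k.
have m0_lt : (m ord0 < k.+1)%N by rewrite ltnS (leq_trans (leq_addr _ _) m_le_k).
have m1_lt : (m (lift ord0 ord0) < k.+1)%N.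
  by rewrite ltnS (leq_trans (leq_addl _ _) m_le_k).
exists (exist _ (Ordinal m0_lt, Ordinal m1_lt) (introT andP (conj m_gt0 m_le_k))).
by apply/mnmP => -[[|[|i]] lt_i2] //; rewrite mnmE /=; congr (m _); apply: val_inj.
Qed.

Definition mpoly_of k (z : Coef R k) : {mpoly R[2]} :=
  z.1%:MP + \sum_t z.2 t *: 'X_[mnm_of t].

Lemma mpoly_of_eval k (z : Coef R k) a :
  (mpoly_of z).@[pt a] = aff_eval z (veronese k a).
Proof.
rewrite mevalD mevalC raddf_sum; congr (_ + _); apply: eq_bigr => t _.
by rewrite /= mevalZ mevalX big_ord_recl big_ord1 !mnmE ffunE.
Qed.

Lemma msize_mpoly_of k (z : Coef R k) : (msize (mpoly_of z) <= k.+1)%N.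
Proof.
rewrite (leq_trans (msizeD_le _ _)) // geq_max msizeC (leq_trans (leq_b1 _)) //=.
rewrite (leq_trans (msize_sum _ _ _)) //; apply/bigmax_leqP => t _.
rewrite (leq_trans (msizeZ_le _ _)) // msizeX mdeg_mnm_of ltnS.
by case/andP: (valP t).
Qed.

Lemma mcoeff_mpoly_of0 k (z : Coef R k) : (mpoly_of z)@_0 = z.1.
Proof.
rewrite mcoeffD mcoeffC eqxx mulr1 raddf_sum big1 ?addr0 // => t _ /=.
by rewrite mcoeffZ mcoeffX (negbTE (mnm_of_neq0 t)) mulr0.
Qed.

Lemma mcoeff_mpoly_of k (z : Coef R k) t : (mpoly_of z)@_(mnm_of t) = z.2 t.
Proof.
rewrite mcoeffD mcoeffC (negbTE (mnm_of_neq0 t)) mulr0 add0r raddf_sum.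
rewrite (bigD1 t) //= mcoeffZ mcoeffX eqxx mulr1 big1 ?addr0 // => s st /=.
by rewrite mcoeffZ mcoeffX (inj_eq (@mnm_of_inj k)) (negbTE st) mulr0.
Qed.

Lemma mpoly_of_linear k : linear (@mpoly_of k).
Proof.
move=> a [c l] [c' l'].
rewrite /mpoly_of /= scalerDr scaler_sumr addrACA -big_split.
congr (_ + _); first by rewrite mpolyCD -mul_mpolyC -mpolyCM.
by apply: eq_bigr => t _; rewrite !ffunE scalerDl scalerA.
Qed.
HB.instance Definition _ k :=
  GRing.isLinear.Build R (Coef R k) {mpoly R[2]} *:%R
    (@mpoly_of k) (@mpoly_of_linear k).

Lemma mpoly_of_inj k : injective (@mpoly_of k).
Proof.
move=> [c l] [c' l'] eq_cl; congr (_, _).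
  by have := congr1 (mcoeff 0) eq_cl; rewrite !mcoeff_mpoly_of0.
apply/ffunP => t.
by have := congr1 (mcoeff (mnm_of t)) eq_cl; rewrite !mcoeff_mpoly_of.
Qed.

Lemma dim_Coef k : dim (Coef R k) = 'C(k.+2, 2).
Proof. by rewrite dim_affine card_Ik. Qed.

Lemma mpoly_of_eq0 k (z : Coef R k) : (mpoly_of z == 0) = (z == 0).
Proof. by rewrite -(inj_eq (@mpoly_of_inj k)) linear0. Qed.

Lemma mpoly_of_const k c : mpoly_of ((c, 0) : Coef R k) = c%:MP.
Proof. by rewrite /mpoly_of big1 ?addr0 // => t _; rewrite ffunE scale0r. Qed.

Lemma msize_mpoly_of_le1 k (z : Coef R k) :
  (msize (mpoly_of z) <= 1)%N -> z = (z.1, 0).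
Proof.
case: z => c l z_le1; congr (_, _); apply/ffunP => t.
rewrite ffunE -(mcoeff_mpoly_of (c, l)).
apply/eqP; rewrite mcoeff_eq0 msize_mdeg_ge // (leq_trans z_le1) // mdeg_mnm_of.
by case/andP: (valP t).
Qed.

Definition coefs_of k (p : {mpoly R[2]}) : Coef R k :=
  (p@_0, [ffun t => p@_(mnm_of t)]).

Lemma coefs_of_linear k : linear (@coefs_of k).
Proof.
move=> a p q; congr (_, _); first by rewrite /= mcoeffD mcoeffZ.
by apply/ffunP => t; rewrite !ffunE mcoeffD mcoeffZ.
Qed.
HB.instance Definition _ k :=
  GRing.isLinear.Build R {mpoly R[2]} (Coef R k) *:%R
    (@coefs_of k) (@coefs_of_linear k).

Lemma coefs_ofK k p : (msize p <= k.+1)%N -> mpoly_of (coefs_of k p) = p.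
Proof.
move=> p_le; apply/mpolyP => m; have [->|m0] := eqVneq m 0%MM.
  by rewrite mcoeff_mpoly_of0.
have [m_le|m_gt] := leqP (mdeg m) k.
  by have [t <-] := mnm_ofP m0 m_le; rewrite mcoeff_mpoly_of ffunE.
rewrite mcoeffD mcoeffC (negbTE m0) mulr0 add0r raddf_sum big1 => [|t _ /=].
  by apply/esym/eqP; rewrite mcoeff_eq0 msize_mdeg_ge // (leq_trans p_le).
rewrite mcoeffZ mcoeffX; case: eqP => [mt|]; last by rewrite mulr0.
by move: m_gt; rewrite -mt mdeg_mnm_of ltnNge; case/andP: (valP t) => _ ->.
Qed.

Definition deg_le_space k K : {vspace Coef R K} :=
  limg (linfun (@coefs_of K \o @mpoly_of k)).

Lemma dim_deg_le_space k K : (k <= K)%N -> \dim (deg_le_space k K) = 'C(k.+2, 2).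
Proof.
move=> le_kK; rewrite dimv_img_inj ?dimvf ?dim_Coef // => x y.
rewrite !lfunE /= => /(congr1 (@mpoly_of K)).
by rewrite !coefs_ofK ?(leq_trans (msize_mpoly_of _)) //; apply: mpoly_of_inj.
Qed.

Lemma msize_deg_le_space k K z : (k <= K)%N -> z \in deg_le_space k K ->
  (msize (mpoly_of z) <= k.+1)%N.
Proof.
move=> le_kK /memv_imgP[x _ ->]; rewrite lfunE /= coefs_ofK ?msize_mpoly_of //.
exact: leq_trans (msize_mpoly_of _) _.
Qed.

End PolynomialsOfBoundedDegree.

Arguments deg_le_space {R} k K.

Lemma msizeM_le_add (R : idomainType) n (p q : {mpoly R[n]}) a b :
  (msize p <= a.+1)%N -> (msize q <= b.+1)%N -> (msize (p * q) <= (a + b).+1)%N.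
Proof.
move=> p_le q_le; have [->|p0] := eqVneq p 0; first by rewrite mul0r msize0.
have [->|q0] := eqVneq q 0; first by rewrite mulr0 msize0.
rewrite msizeM // -subn1; lia.
Qed.

Section VanishingConditions.
Variable R : fieldType.

Lemma dimv_leq_vanishing (aT : vectType R) (ev : aT -> {mpoly R[2]})
    (ev_lin : linear ev) (V W : {vspace aT}) (B : seq (R * R)) :
  (forall z, z \in V -> {in B, forall a, (ev z).@[pt a] = 0} -> z \in W) ->
  (\dim V <= \dim W + size B)%N.
Proof.
move=> VW; pose evB z : {ffun 'I_(size B) -> R^o} :=
  [ffun i => (ev z).@[pt (tnth (in_tuple B) i)]].
have evB_lin : linear evB.
  by move=> c y z; apply/ffunP => i; rewrite !ffunE ev_lin mevalD mevalZ.
have -> : size B = dim {ffun 'I_(size B) -> R^o}.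
  by rewrite dim_regular_ffun card_ord.
apply: (dimv_leq_ker (h := hom_of_linear evB_lin)) => z zV.
rewrite hom_of_linearE => evB0.
apply: VW => // _ /(tnthP (in_tuple B))[i ->].
by have := congr1 (fun g : {ffun _ -> _} => g i) evB0; rewrite !ffunE.
Qed.

Lemma exists_max_msize k (V : {vspace Coef R k}) : V != 0%VS ->
  exists2 g, g \in V & g != 0 /\
    {in V, forall z, msize (mpoly_of z) <= msize (mpoly_of g)}%N.
Proof.
move=> V0; have dimV : (0 < #|'I_(\dim V)|)%N by rewrite card_ord lt0n dimv_eq0.
have [i _ maxi] :=
  eq_bigmax_cond (fun i : 'I_(\dim V) => msize (mpoly_of (vbasis V)`_i)) dimV.
have basis_i : (vbasis V)`_i \in vbasis V by rewrite mem_nth ?size_tuple.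
exists (vbasis V)`_i; first exact: vbasis_mem.
split; first exact: basis_not0 (vbasisP V) basis_i.
move=> z /coord_vbasis ->; rewrite linear_sum -maxi.
rewrite (leq_trans (msize_sum _ _ _)) //; apply/bigmax_leqP => j _.
rewrite linearZ (leq_trans (msizeZ_le _ _)) //.
exact: (leq_bigmax_cond (P := mem 'I_(\dim V))).
Qed.

Lemma max_msize_mul_add k m (g mu : Coef R k) (h : Coef R m) : g != 0 ->
  (msize (mpoly_of mu) <= msize (mpoly_of g))%N ->
  mpoly_of g * mpoly_of h + mpoly_of mu = 0 -> h = (h.1, 0) /\ mu = - h.1 *: g.
Proof.
move=> g0 mu_le /eqP; rewrite addr_eq0 => /eqP gh_mu.
have h_const : h = (h.1, 0).
  apply: msize_mpoly_of_le1; have [->|h0] := eqVneq h 0.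
    by rewrite linear0 msize0.
  move: mu_le; rewrite -msizeN -gh_mu msizeM ?mpoly_of_eq0 //.
  by rewrite -subn1 leq_subLR addnC leq_add2r.
have mpoly_h : mpoly_of h = h.1%:MP by rewrite [in LHS]h_const mpoly_of_const.
split=> //; apply: mpoly_of_inj; rewrite linearZ /= scaleNr -[LHS]opprK.
by rewrite -gh_mu mpoly_h mulrC mul_mpolyC.
Qed.

End VanishingConditions.

Section VeroneseImageOfFlat.
Variables (R : fieldType) (e f : nat) (v0 : Vk R e) (U : {vspace Vk R e}).
Variable A : seq (R * R).
Hypothesis A_size : size A = 'C(f.+2, 2).
Hypothesis A_off_curves : ~ in_curve_le f A.

Definition on_flat a := flat_mem v0 U (veronese e a).
Definition off_flat := [seq a <- A | ~~ on_flat a].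

Local Notation J := (annihilator v0 U).

Lemma count_on_flat_add_off : (count on_flat A + size off_flat)%N = 'C(f.+2, 2).
Proof. by rewrite size_filter count_predC A_size. Qed.

Lemma vanishing_on_A_eq0 p : (msize p <= f.+1)%N ->
  {in A, forall a, p.@[pt a] = 0} -> p = 0.
Proof.
move=> p_le p_A; apply/eqP/negPn/negP => p0.
have p_gt0 : (0 < msize p)%N by rewrite lt0n msize_poly_eq0.
have [/eqP/msize_poly1P[c c0 p_c]|p_nconst] := eqVneq (msize p) 1%N.
  have : (0 < size A)%N by rewrite A_size bin_gt0.
  case: A p_A => // a s p_A _; move/eqP: (p_A a (mem_head a s)).
  by rewrite p_c mevalC (negbTE c0).
apply: A_off_curves; exists (msize p).-1; split.
  by rewrite -subn1; lia.
exists p; split; first by rewrite prednK.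
by apply/allP => a /p_A p_a; rewrite /on_zero_set p_a.
Qed.

Lemma annihilator_vanish_on_flat z a :
  z \in J -> on_flat a -> (mpoly_of z).@[pt a] = 0.
Proof. by rewrite mpoly_of_eval; apply: annihilator_vanish. Qed.

Lemma count_on_flat_le_dim : (f <= e)%N -> (count on_flat A <= 1 + \dim U)%N.
Proof.
move=> le_fe; pose Q : {vspace Coef R e} := deg_le_space f e.
have cap_le : (\dim (J :&: Q) <= size off_flat)%N.
  have := dimv_leq_vanishing (@mpoly_of_linear R e)
    (V := J :&: Q) (W := 0%VS) (B := off_flat).
  rewrite dimv0; apply=> z /memv_capP[zJ zQ] z_off; rewrite memv0 -mpoly_of_eq0.
  apply/eqP/vanishing_on_A_eq0; first exact: msize_deg_le_space.
  move=> a aA; have [a_on|a_off] := boolP (on_flat a).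
    exact: annihilator_vanish_on_flat.
  by apply: z_off; rewrite mem_filter a_off.
have := dimv_add_leq_cap J Q; rewrite dim_deg_le_space // dim_Coef.
have := dim_annihilator v0 U; have := card_Ik e; have := count_on_flat_add_off; lia.
Qed.

Hypothesis U_proper : U != fullv.

Lemma annihilator_neq0 : J != 0%VS.
Proof.
have := dimv_leqif_eq (subvf U); rewrite (negbTE U_proper) dimvf dim_regular_ffun.
move=> /leqifP U_lt; rewrite -dimv_eq0 -lt0n.
by have := dim_annihilator v0 U; lia.
Qed.

Lemma vanishing_off_flat_eq0 p : (e < f)%N -> (msize p <= (f - e).+1)%N ->
  {in off_flat, forall a, p.@[pt a] = 0} -> p = 0.
Proof.
move=> lt_ef p_le p_off; pose g := mpoly_of (vpick J).
have g0 : g != 0 by rewrite mpoly_of_eq0 vpick0 annihilator_neq0.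
suff : g * p = 0 by move/eqP; rewrite mulf_eq0 (negbTE g0) => /eqP.
apply: vanishing_on_A_eq0.
  by rewrite -[f](subnKC (ltnW lt_ef)) msizeM_le_add ?msize_mpoly_of.
move=> a aA; rewrite mevalM; have [a_on|a_off] := boolP (on_flat a).
  by rewrite annihilator_vanish_on_flat ?memv_pick ?mul0r.
by rewrite p_off ?mulr0 // mem_filter a_off.
Qed.

Lemma off_flat_nonempty : (e < f)%N -> exists t0, t0 \in off_flat.
Proof.
move=> lt_ef; case E : off_flat => [|t0 s]; last by exists t0; rewrite mem_head.
have : (1 : {mpoly R[2]}) = 0.
  by apply: vanishing_off_flat_eq0; rewrite ?msize1 // E => a; rewrite in_nil.
by move/eqP; rewrite oner_eq0.
Qed.

Lemma vanishing_combination_eq0 g (h : Coef R (f - e)) mu : (e < f)%N ->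
  g \in J -> mu \in J ->
  {in off_flat, forall a, (mpoly_of g * mpoly_of h + mpoly_of mu).@[pt a] = 0} ->
  mpoly_of g * mpoly_of h + mpoly_of mu = 0.
Proof.
move=> lt_ef gJ muJ gh_mu_off; apply: vanishing_on_A_eq0.
  rewrite (leq_trans (msizeD_le _ _)) // geq_max.
  have := msizeM_le_add (msize_mpoly_of g) (msize_mpoly_of h).
  rewrite subnKC ?(ltnW lt_ef) // => ->.
  by rewrite (leq_trans (msize_mpoly_of _)) // ltnS ltnW.
move=> a aA; have [a_on|a_off] := boolP (on_flat a).
  by rewrite mevalD mevalM !annihilator_vanish_on_flat // mul0r addr0.
by apply: gh_mu_off; rewrite mem_filter a_off.
Qed.

Lemma dim_span_veronese_off_flat d t0 : (e < f)%N -> (f - e <= d)%N ->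
  t0 \in off_flat ->
  (#|Ik (f - e)| <=
     \dim <<[seq (y - veronese d t0)%R | y <- map (veronese d) off_flat]>>)%N.
Proof.
set X := (<<_>>)%VS => lt_ef le_d t0_off.
pose Jd := annihilator (veronese d t0) X.
pose Q : {vspace Coef R d} := deg_le_space (f - e) d.
have cap0 : (Jd :&: Q = 0)%VS.
  apply/eqP; rewrite -subv0; apply/subvP => z /memv_capP[zJ zQ]; rewrite memv0.
  rewrite -mpoly_of_eq0; apply/eqP/vanishing_off_flat_eq0 => //.
    exact: msize_deg_le_space.
  move=> t t_off; rewrite mpoly_of_eval (annihilator_vanish zJ) //.
  by apply/memv_span/map_f/map_f.
have := dimv_add_leq_cap Jd Q.
rewrite cap0 dimv0 add0n dim_deg_le_space // dim_Coef -!card_Ik => dim_sum.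
rewrite -ltnS -(leq_add2l (\dim Jd)) (leq_trans dim_sum) // addnS ltnS.
exact: dim_annihilator.
Qed.

Lemma count_on_flat_binom_le : (e < f)%N ->
  (count on_flat A + 'C((f - e).+2, 2) + 'C(e.+2, 2) <= 'C(f.+2, 2) + 2 + \dim U)%N.
Proof.
move=> lt_ef; have [g gJ [g0 g_max]] := exists_max_msize annihilator_neq0.
pose ev (x : (Coef R (f - e) * subvs_of J)%type) :=
  mpoly_of g * mpoly_of x.1 + mpoly_of (vsval x.2).
have ev_lin : linear ev.
  by move=> c x y; rewrite /ev /= !linearP /= mulrDr -scalerAr addrACA -scalerDr.
pose dir : (Coef R (f - e) * subvs_of J)%type := ((1, 0), vsproj J (- g)).
have ker_line x : x \in fullv -> {in off_flat, forall a, (ev x).@[pt a] = 0} ->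
    x \in <[dir]>%VS.
  case: x => h w _ h_off; have wJ : vsval w \in J := subvsP w.
  have /= [h_const mu_g] := max_msize_mul_add g0 (g_max _ wJ)
    (vanishing_combination_eq0 lt_ef gJ wJ h_off).
  have -> : w = (h.1 : R) *: vsproj J (- g).
    by rewrite -[w]vsvalK mu_g scaleNr -scalerN linearZ.
  apply/vlineP; exists h.1; rewrite {1}h_const /dir.
  apply: (congr2 pair) => //; apply: (congr2 pair).
    exact: (esym (mulr1 _)).
  exact: (esym (scaler0 _ _)).
have dim_D :
    dim (Coef R (f - e) * subvs_of J)%type = ('C((f - e).+2, 2) + \dim J)%N.
  exact: (congr1 (addn^~ (\dim J)) (dim_Coef R (f - e))).
have := dimv_leq_vanishing ev_lin ker_line; rewrite dimvf dim_D dim_vline.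
have := leq_b1 (dir != 0); have := dim_annihilator v0 U; have := card_Ik e.
have := count_on_flat_add_off.
(* Generalizing identifies copies of a term that differ only in their inferred
   instances, which lia would treat as distinct atoms. *)
by move: (size off_flat) => n; lia.
Qed.

End VeroneseImageOfFlat.

Theorem lemma15 (R : rcfType) (e f : nat) (he : (0 < e)%N)
  (v0 : Vk R e) (U : {vspace Vk R e})
  (hproper : U != fullv)
  (A : seq (R * R)) (hAuniq : uniq A) (hAsize : size A = 'C(f.+2, 2))
  (hAcurve : ~ in_curve_le f A) :
  let F := flat_mem v0 U in
  let psiAF := undup [seq x <- map (veronese e) A | F x] in
  ((f <= e)%N -> (size psiAF <= 1 + \dim U)%N) /\
  ((e < f)%N -> (size psiAF)%:Z <=
      ('C(f.+2, 2))%:Z - ('C((f - e).+2, 2))%:Z - ('C(e.+2, 2))%:Z + 2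
      + (\dim U)%:Z) /\
  ((e < f)%N -> forall d : nat, (f - e <= d)%N ->
      exists n : int,
        has_dim (fun x : Vk R d =>
                   x \in map (veronese d) [seq a <- A | ~~ F (veronese e a)]) n
        /\ ('C((f - e).+2, 2))%:Z - 1 <= n).
Proof.
move=> F psiAF.
have psiAF_le : (size psiAF <= count (on_flat v0 U) A)%N.
  by rewrite (leq_trans (size_undup _)) // filter_map size_map size_filter.
split; [|split].
- move=> le_fe.
  exact: leq_trans psiAF_le (count_on_flat_le_dim v0 U hAsize hAcurve le_fe).
- move=> lt_ef; have := count_on_flat_binom_le v0 hAsize hAcurve hproper lt_ef.
  by move: (\dim U) => u; lia.
move=> lt_ef d le_d.
have [t0 t0_off] := off_flat_nonempty v0 hAsize hAcurve hproper lt_ef.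
set X := <<[seq (y - veronese d t0)%R | y <- map (veronese d) (off_flat v0 U A)]>>%VS.
exists (\dim X)%:Z; split.
  by right; exists (veronese d t0), X; split=> //; apply/Fl_seqE/map_f.
have := dim_span_veronese_off_flat hAsize hAcurve hproper lt_ef le_d t0_off.
by have := card_Ik (f - e); move: (\dim X) => x; lia.
Qed.
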